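(* Let $L$ be a PG-lattice and $M$ a faithful multiplication PG-lattice $L$-module. Then for every family $\{a_\alpha\mid\alpha\in\Delta\}\subseteq L$, $$\bigwedge_{\alpha\in\Delta}(a_\alpha I_M)=\Big(\bigwedge_{\alpha\in\Delta}a_\alpha\Big)I_M.$$
   Context: $L$ is a multiplicative lattice (complete lattice with commutative, associative multiplication distributing over arbitrary joins, identity $1$, least $0$), compactly generated, $1$ compact, finite products of compact elements compact. An $L$-module is a complete lattice $M$ (least $O_M$, greatest $I_M$) with product $aB\in M$ satisfying $(\bigvee a_\alpha)A=\bigvee(a_\alpha A)$, $a(\bigvee A_\alpha)=\bigvee(aA_\alpha)$, $(ab)A=a(bA)$, $1A=A$, $0A=O_M$. $(A:B)=\bigvee\{x\in L:xB\leqslant A\}$ for $A,B\in M$; $(a:b)=\bigvee\{x\in L:xb\leqslant a\}$ for $a,b\in L$. $e\in L$ is principal if $a\wedge be=((a:e)\wedge b)e$ and $(ae\vee b):e=(b:e)\vee a$ for all $a,b\in L$; $L$ is a PG-lattice if every element is a join of principal elements. $N\in M$ is principal if $(b\wedge(B:N))N=bN\wedge B$ and $b\vee(B:N)=((bN\vee B):N)$ for all $b\in L,B\in M$; $M$ is a PG-lattice module if every element is a join of principal elements. $M$ is faithful if $(O_M:I_M)=0$; a multiplication module if every $N\in M$ equals $aI_M$ for some $a\in L$. *)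

From Stdlib Require Import List.

Definition image {A B : Type} (f : A -> B) (S : A -> Prop) : B -> Prop :=
  fun y => exists x, S x /\ y = f x.

Record complete_lattice (T : Type) := CompleteLattice {
  le : T -> T -> Prop;
  sup : (T -> Prop) -> T;
  le_refl : forall x, le x x;
  le_trans : forall x y z, le x y -> le y z -> le x z;
  le_antisym : forall x y, le x y -> le y x -> x = y;
  sup_ub : forall S x, S x -> le x (sup S);
  sup_least : forall S y, (forall x, S x -> le x y) -> le (sup S) y
}.
Arguments le {T} c _ _.
Arguments sup {T} c _.

Section CL.
Context {T : Type} (c : complete_lattice T).
Definition inf (S : T -> Prop) : T := sup c (fun y => forall x, S x -> le c y x).
Definition bot : T := sup c (fun _ => False).
Definition top : T := sup c (fun _ => True).
Definition join2 (x y : T) : T := sup c (fun z => z = x \/ z = y).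
Definition meet2 (x y : T) : T := inf (fun z => z = x \/ z = y).
Definition compact (x : T) : Prop :=
  forall S, le c x (sup c S) ->
    exists l : list T, (forall y, In y l -> S y) /\ le c x (sup c (fun y => In y l)).
End CL.

Record mult_lattice := MultLattice {
  ml_car :> Type;
  ml_cl : complete_lattice ml_car;
  mul : ml_car -> ml_car -> ml_car;
  mul_comm : forall a b, mul a b = mul b a;
  mul_assoc : forall a b c, mul a (mul b c) = mul (mul a b) c;
  mul_sup : forall a S, mul a (sup ml_cl S) = sup ml_cl (image (mul a) S);
  mul_top_l : forall a, mul (top ml_cl) a = a;
  ml_comp_gen : forall x, exists S, (forall y, S y -> compact ml_cl y) /\ x = sup ml_cl S;
  ml_top_compact : compact ml_cl (top ml_cl);
  ml_mul_compact : forall a b, compact ml_cl a -> compact ml_cl b -> compact ml_cl (mul a b)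
}.
Arguments mul {m} _ _.

Definition lcolon {L : mult_lattice} (a b : L) : L :=
  sup (ml_cl L) (fun x => le (ml_cl L) (mul x b) a).

Definition principal {L : mult_lattice} (e : L) : Prop :=
  (forall a b : L, meet2 (ml_cl L) a (mul b e) = mul (meet2 (ml_cl L) (lcolon a e) b) e) /\
  (forall a b : L, lcolon (join2 (ml_cl L) (mul a e) b) e = join2 (ml_cl L) (lcolon b e) a).

Definition PG_lattice (L : mult_lattice) : Prop :=
  forall x : L, exists S, (forall e, S e -> principal e) /\ x = sup (ml_cl L) S.

Record lmodule (L : mult_lattice) := LModule {
  lm_car :> Type;
  lm_cl : complete_lattice lm_car;
  act : L -> lm_car -> lm_car;
  act_sup_l : forall S A, act (sup (ml_cl L) S) A = sup lm_cl (image (fun a => act a A) S);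
  act_sup_r : forall a S, act a (sup lm_cl S) = sup lm_cl (image (act a) S);
  act_assoc : forall a b A, act (mul a b) A = act a (act b A);
  act_one : forall A, act (top (ml_cl L)) A = A;
  act_zero : forall A, act (bot (ml_cl L)) A = bot lm_cl
}.
Arguments lm_cl {L} _.
Arguments act {L l} _ _.

Section Mod.
Context {L : mult_lattice} (M : lmodule L).
Definition I_M : M := top (lm_cl M).
Definition O_M : M := bot (lm_cl M).
Definition mcolon (A B : M) : L :=
  sup (ml_cl L) (fun x => le (lm_cl M) (act x B) A).
Definition mprincipal (N : M) : Prop :=
  (forall (b : L) (B : M),
      act (meet2 (ml_cl L) b (mcolon B N)) N = meet2 (lm_cl M) (act b N) B) /\
  (forall (b : L) (B : M),
      join2 (ml_cl L) b (mcolon B N) = mcolon (join2 (lm_cl M) (act b N) B) N).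
Definition PG_module : Prop :=
  forall N : M, exists S, (forall P, S P -> mprincipal P) /\ N = sup (lm_cl M) S.
Definition faithful : Prop := mcolon O_M I_M = bot (ml_cl L).
Definition multiplication_module : Prop := forall N : M, exists a : L, N = act a I_M.
End Mod.


(* Write X for the meet of the a_i I_M and d for the meet of the
   a_i.  Monotonicity of the action gives d I_M <= X; the content is X <= d I_M.
   Since M is a multiplication module, X = c I_M for some c, and since M is a
   PG-module, I_M is a join of principal elements Q; hence X is the join of the
   c Q = c (Q:I_M) I_M = (Q:I_M) X, and it suffices to bound q X, q = (Q:I_M),
   by d I_M for every principal Q.  For such Q the element B = q X lies below
   Q, so principality gives B = s Q with s = (B:Q), and also
   s <= (a_i Q : Q) = a_i \/ (O_M:Q) for every i.  Faithfulness kills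
   q (O_M:Q), hence s q <= a_i for all i, so s q <= d and B = s q I_M <= d I_M. *)

Section CompleteLatticeFacts.
Context {T : Type} (c : complete_lattice T).

Lemma inf_lb (S : T -> Prop) x : S x -> le c (inf c S) x.
Proof. intros Hx. apply sup_least. intros y Hy. apply Hy, Hx. Qed.

Lemma inf_glb (S : T -> Prop) y : (forall x, S x -> le c y x) -> le c y (inf c S).
Proof. intros H. apply sup_ub. exact H. Qed.

Lemma top_ge x : le c x (top c).
Proof. apply sup_ub. exact I. Qed.

Lemma bot_le x : le c (bot c) x.
Proof. apply sup_least. intros _ []. Qed.

Lemma join2_l x y : le c x (join2 c x y).
Proof. apply sup_ub. now left. Qed.

Lemma meet2_eq_r x y : le c y x -> meet2 c x y = y.
Proof.
  intros H. apply (le_antisym _ c).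
  - apply inf_lb. now right.
  - apply inf_glb. intros z [-> | ->]; [exact H | apply le_refl].
Qed.

Lemma join2_eq_l x y : le c y x -> join2 c x y = x.
Proof.
  intros H. apply (le_antisym _ c).
  - apply sup_least. intros z [-> | ->]; [apply le_refl | exact H].
  - apply join2_l.
Qed.

Lemma join2_eq_r x y : le c x y -> join2 c x y = y.
Proof.
  intros H. apply (le_antisym _ c).
  - apply sup_least. intros z [-> | ->]; [exact H | apply le_refl].
  - apply sup_ub. now right.
Qed.
End CompleteLatticeFacts.

Section ModuleFacts.
Context {L : mult_lattice} (M : lmodule L).
Notation cL := (ml_cl L).
Notation cM := (lm_cl M).

(* Multiplication and the action preserve the order in each argument,
   because they preserve binary joins. *)
Lemma mul_mono_r (a b b' : L) : le cL b b' -> le cL (mul a b) (mul a b').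
Proof.
  intros H. rewrite <- (join2_eq_r cL b b' H). unfold join2. rewrite mul_sup.
  apply sup_ub. exists b. split; auto.
Qed.

Lemma mul_le_l (a b : L) : le cL (mul a b) a.
Proof.
  apply le_trans with (mul a (top cL)); [apply mul_mono_r, top_ge |].
  rewrite mul_comm, mul_top_l. apply le_refl.
Qed.

Lemma act_mono_l (a b : L) (A : M) : le cL a b -> le cM (act a A) (act b A).
Proof.
  intros H. rewrite <- (join2_eq_r cL a b H). unfold join2. rewrite act_sup_l.
  apply sup_ub. exists a. split; auto.
Qed.

Lemma act_mono_r (a : L) (A B : M) : le cM A B -> le cM (act a A) (act a B).
Proof.
  intros H. rewrite <- (join2_eq_r cM A B H). unfold join2. rewrite act_sup_r.
  apply sup_ub. exists A. split; auto.
Qed.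

Lemma act_comm (a b : L) (A : M) : act a (act b A) = act b (act a A).
Proof. now rewrite <- !act_assoc, mul_comm. Qed.

Lemma act_mcolon (B N : M) : le cM (act (mcolon M B N) N) B.
Proof. unfold mcolon. rewrite act_sup_l. apply sup_least. now intros x [y [Hy ->]]. Qed.

Lemma mcolon_ub (x : L) (B N : M) : le cM (act x N) B -> le cL x (mcolon M B N).
Proof. intros H. apply sup_ub. exact H. Qed.

Lemma multiplication_eq (Hm : multiplication_module M) (N : M) :
  N = act (mcolon M N (I_M M)) (I_M M).
Proof.
  apply (le_antisym _ cM); [| apply act_mcolon].
  destruct (Hm N) as [c HN]. rewrite HN at 1. apply act_mono_l, mcolon_ub.
  rewrite <- HN. apply le_refl.
Qed.

Lemma faithful_annihilator (Hf : faithful M) (x : L) :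
  le cM (act x (I_M M)) (O_M M) -> le cL x (bot cL).
Proof. intros H. rewrite <- Hf. now apply mcolon_ub. Qed.

Lemma principal_cancel (Q B : M) :
  mprincipal M Q -> le cM B Q -> B = act (mcolon M B Q) Q.
Proof.
  intros [Hmeet _] HBQ. specialize (Hmeet (top cL) B).
  rewrite (meet2_eq_r _ _ _ (top_ge _ _)), act_one, (meet2_eq_r _ _ _ HBQ) in Hmeet.
  now symmetry.
Qed.

Lemma principal_mcolon_act (Q : M) (a : L) :
  mprincipal M Q -> mcolon M (act a Q) Q = join2 cL a (mcolon M (O_M M) Q).
Proof.
  intros [_ Hjoin]. rewrite Hjoin. f_equal. symmetry. apply join2_eq_l. apply bot_le.
Qed.

Lemma principal_part_le (Hf : faithful M) (Hm : multiplication_module M)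
    (S : L -> Prop) (X Q : M) :
  mprincipal M Q -> (forall x, S x -> le cM X (act x (I_M M))) ->
  le cM (act (mcolon M Q (I_M M)) X) (act (inf cL S) (I_M M)).
Proof.
  intros HQp HX.
  set (q := mcolon M Q (I_M M)).
  assert (HQ : Q = act q (I_M M)) by apply (multiplication_eq Hm).
  set (s := mcolon M (act q X) Q).
  set (o := mcolon M (O_M M) Q).
  assert (HB : act q X = act s Q).
  { apply principal_cancel; [exact HQp |].
    rewrite HQ. apply act_mono_r, top_ge. }
  assert (Hqo : le cL (mul q o) (bot cL)).
  { apply faithful_annihilator; [exact Hf |].
    rewrite act_assoc, act_comm, <- HQ. apply act_mcolon. }
  assert (Hs : forall x, S x -> le cL s (join2 cL x o)).
  { intros x Hx. unfold o. rewrite <- (principal_mcolon_act Q x HQp).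
    apply mcolon_ub. rewrite <- HB, HQ, act_comm. apply act_mono_r, HX, Hx. }
  assert (Hsq : le cL (mul s q) (inf cL S)).
  { apply inf_glb. intros x Hx. rewrite mul_comm.
    apply le_trans with (mul q (join2 cL x o)); [apply mul_mono_r, Hs, Hx |].
    unfold join2. rewrite mul_sup. apply sup_least.
    intros y [z [[-> | ->] ->]].
    - rewrite mul_comm. apply mul_le_l.
    - apply le_trans with (bot cL); [exact Hqo | apply bot_le]. }
  rewrite HB, HQ, <- act_assoc. now apply act_mono_l.
Qed.
End ModuleFacts.

Theorem lemma3p3 (L : mult_lattice) (M : lmodule L)
  (HL : PG_lattice L) (Hf : faithful M) (Hm : multiplication_module M)
  (HPG : PG_module M) (Delta : Type) (a : Delta -> L) :
  inf (lm_cl M) (fun N => exists i : Delta, N = act (a i) (I_M M)) =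
  act (inf (ml_cl L) (fun x => exists i : Delta, x = a i)) (I_M M).
Proof.
  set (X := inf (lm_cl M) (fun N => exists i : Delta, N = act (a i) (I_M M))).
  apply (le_antisym _ (lm_cl M)).
  2: { apply inf_glb. intros N [i ->]. apply act_mono_l, inf_lb. now exists i. }
  (* X = c I_M and I_M is a join of principal elements, so X = \/ c Q. *)
  destruct (Hm X) as [c Hc].
  destruct (HPG (I_M M)) as [P [HP HI]].
  assert (HX : X = sup (lm_cl M) (image (act c) P)).
  { rewrite Hc at 1. rewrite HI at 1. apply act_sup_r. }
  rewrite HX at 1. apply sup_least. intros y [Q [HPQ ->]].
  (* c Q = (Q:I_M) c I_M = (Q:I_M) X *)
  rewrite (multiplication_eq M Hm Q) at 1. rewrite act_comm, <- Hc.
  apply principal_part_le; [exact Hf | exact Hm | apply HP, HPQ |].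
  intros x [i ->]. apply inf_lb. now exists i.
Qed.
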